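(* For every $a \in \mathbb{N}$ and every integer $b \ge 2$, $R_\mathrm{cyc}(S_a, C_b^\mathrm{mon}) = 1 + (a-1)(b-1)$, where $S_a$ is any star graph of order $a$.
   Context: All graphs are finite, simple and undirected, and a graph of order $n$ has vertex set $\{0,1,\ldots,n-1\}$; $K_n$ is the complete graph on $\{0,\ldots,n-1\}$. A $2$-edge-coloring of $K_n$ assigns each edge a color in $\{1,2\}$. An embedding of $H$ in color $j$ is an injective map $\varphi\colon V(H)\to V(K_n)$ such that every edge $uv$ of $H$ goes to an edge $\{\varphi(u),\varphi(v)\}$ of color $j$; it is increasing up to a cyclic permutation if there exists $t\in V(H)$ such that $(\varphi(t),\ldots,\varphi(|H|-1),\varphi(0),\ldots,\varphi(t-1))$ is increasing. $R_\mathrm{cyc}(H_1,H_2)$ is the smallest $n$ such that every $2$-edge-coloring of $K_n$ admits an embedding of $H_1$ in color $1$ or of $H_2$ in color $2$ that is increasing up to a cyclic permutation. A star graph of order $n$ is a graph on $\{0,\ldots,n-1\}$ in which one vertex (the center, arbitrary) is adjacent to all others and there are no other edges. For $n\ge3$ the monotone cycle $C_n^\mathrm{mon}$ has edges $\{i,i+1\}$ ($0\le i\le n-2$) and $\{0,n-1\}$; by convention $C_2^\mathrm{mon}=K_2$. *)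

From mathcomp Require Import all_boot.
Set Implicit Arguments. Unset Strict Implicit. Unset Printing Implicit Defensive.

(* A graph of order h is an edge relation on 'I_h = {0,...,h-1}
   (for the graphs used here it is symmetric and irreflexive). *)

(* A 2-edge-colouring of K_n: [c x y] for x < y gives the colour of the edge
   {x,y}; [true] stands for colour 1 and [false] for colour 2. *)
Definition coloring (n : nat) := 'I_n -> 'I_n -> bool.

Definition edge_col n (c : coloring n) (x y : 'I_n) : bool :=
  if (x < y)%N then c x y else c y x.

Definition embedding_in_color h n (eH : rel 'I_h) (c : coloring n) (j : bool)
  (phi : 'I_h -> 'I_n) : Prop :=
  injective phi /\
  forall u v : 'I_h, eH u v -> u != v -> edge_col c (phi u) (phi v) = j.

Definition cyc_increasing h n (phi : 'I_h -> 'I_n) : Prop :=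
  exists t : 'I_h, sorted ltn (rot t [seq val (phi i) | i <- enum 'I_h]).

Definition ramsey_cyc_prop h1 h2 (e1 : rel 'I_h1) (e2 : rel 'I_h2) (n : nat)
  : Prop :=
  forall c : coloring n,
    (exists phi, embedding_in_color e1 c true phi /\ cyc_increasing phi) \/
    (exists phi, embedding_in_color e2 c false phi /\ cyc_increasing phi).

Definition Rcyc_eq h1 h2 (e1 : rel 'I_h1) (e2 : rel 'I_h2) (m : nat) : Prop :=
  ramsey_cyc_prop e1 e2 m /\ forall n, (n < m)%N -> ~ ramsey_cyc_prop e1 e2 n.

Definition is_star a (e : rel 'I_a) : Prop :=
  exists ctr : 'I_a, forall u v : 'I_a,
    e u v = ((u == ctr) && (v != ctr)) || ((v == ctr) && (u != ctr)).

(* monotone cycle C_b^mon: edges {i,i+1} and {0,b-1}; for b = 2 this is K_2 *)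
Definition cmon (b : nat) : rel 'I_b :=
  fun u v => (u != v) &&
    [|| (val u).+1 == val v, (val v).+1 == val u,
        (val u == 0) && (val v == b.-1) | (val v == 0) && (val u == b.-1)].
Arguments cmon b : clear implicits.

From mathcomp Require Import all_boot zify.
Set Implicit Arguments. Unset Strict Implicit. Unset Printing Implicit Defensive.

(* Write k = a - 1.  Upper bound, on n = 1 + k (b - 1) vertices: if some vertex
   x has k neighbours in colour 1, then x and these neighbours, listed in
   increasing order and rotated so that x sits at the position of the centre,
   form a cyclically increasing star.  Otherwise every colour-1 degree is below
   k, and greedily removing closed colour-1 neighbourhoods (at most k vertices
   each) yields a colour-1 independent set of more than b - 1 vertices, i.e. a
   colour-2 clique of size b, which contains an increasing copy of C_b.
   Lower bound, on n <= k (b - 1) vertices: colour an edge 1 iff its ends lie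
   in the same block of k consecutive vertices.  A colour-1 star lies inside a
   single block, which is too small; along a cyclically increasing colour-2
   copy of C_b consecutive vertices lie in strictly increasing blocks, but
   there are only b - 1 blocks. *)

Lemma sorted_enum_set n (A : {pred 'I_n}) : sorted ltn (map val (enum A)).
Proof.
rewrite -[enum A](eq_filter (mem_enum A)) -(eq_filter (mem_map val_inj _)).
rewrite -filter_map (sorted_filter ltn_trans) //.
by rewrite -enumT val_enum_ord iota_ltn_sorted.
Qed.

Lemma nth_rotr_cons (T : Type) (x0 x : T) (s : seq T) (i : nat) :
  i <= size s -> nth x0 (rotr i (x :: s)) i = x.
Proof.
move=> le_i.
by rewrite /rotr /rot nth_cat size_drop /= subKn ?leqW // ltnn subnn subSn.
Qed.

Section NthOrd.
Variables (h n : nat) (x0 : 'I_n) (r : seq 'I_n).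
Hypothesis size_r : size r = h.

Lemma map_nth_enum_ord : [seq nth x0 r i | i : 'I_h <- enum 'I_h] = r.
Proof.
by rewrite -[RHS](mkseq_nth x0) size_r /mkseq -val_enum_ord -map_comp.
Qed.

Lemma nth_ord_inj : uniq r -> injective (fun i : 'I_h => nth x0 r i).
Proof.
by move=> uniq_r i j /eqP; rewrite nth_uniq ?size_r // => /eqP/val_inj.
Qed.

Lemma nth_ord_cyc_increasing t :
  0 < h -> sorted ltn (map val (rot t r)) ->
  cyc_increasing (fun i : 'I_h => nth x0 r i).
Proof.
move=> h_gt0 sorted_rot; rewrite /cyc_increasing.
have -> : [seq val (nth x0 r i) | i : 'I_h <- enum 'I_h] = map val r.
  by rewrite (map_comp val (fun i : 'I_h => nth x0 r i)) map_nth_enum_ord.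
have [t_lt | t_ge] := ltnP t h.
  by exists (Ordinal t_lt); rewrite -map_rot.
rewrite rot_oversize ?size_r // in sorted_rot.
by exists (Ordinal h_gt0); rewrite rot0.
Qed.

End NthOrd.

Lemma sorted_ltn_val_uniq n (r : seq 'I_n) : sorted ltn (map val r) -> uniq r.
Proof.
by move/(sorted_uniq ltn_trans ltnn); rewrite (map_inj_uniq val_inj).
Qed.

Lemma greedy_independent_set (T : finType) (r : rel T) (k : nat) :
  irreflexive r -> symmetric r -> (forall x, #|[set y | r x y]| < k) ->
  forall S : {set T}, exists I : {set T},
    [/\ I \subset S, {in I &, forall x y, ~~ r x y} & #|S| <= k * #|I|].
Proof.
move=> r_irr r_sym deg S; move: {2}#|S| (leqnn #|S|) => m.
elim: m S => [|m IH] S card_S; have [-> | [x xS]] := set_0Vmem S;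
  try by exists set0; rewrite sub0set cards0; split=> // x y; rewrite inE.
  suff : 0 < #|S| by rewrite ltnNge card_S.
  by apply/card_gt0P; exists x.
pose B := x |: [set y | r x y].
have card_B : #|B| <= k by rewrite cardsU1 inE r_irr add1n deg.
have card_SB : 0 < #|S :&: B|.
  by apply/card_gt0P; exists x; rewrite inE xS setU11.
have card_SB' : #|S :\: B| <= m by have := cardsID B S; lia.
have [I [sub_I indep_I card_I]] := IH (S :\: B) card_SB'.
have notB y : y \in I -> y != x /\ ~~ r x y.
  move=> /(subsetP sub_I); rewrite !inE negb_or => /andP[/andP[] //].
have xI : x \notin I by apply/negP => /notB[]; rewrite eqxx.
exists (x |: I); split.
- by rewrite subUset sub1set xS (subset_trans sub_I) ?subsetDl.
- move=> y z; rewrite !inE => /predU1P[-> | yI] /predU1P[-> | zI].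
  + by rewrite r_irr.
  + by have [] := notB z zI.
  + by have [] := notB y yI; rewrite r_sym.
  + exact: indep_I.
- have := cardsID B S; have := subset_leq_card (subsetIr S B).
  rewrite cardsU1 xI; lia.
Qed.

Lemma edge_colC n (c : coloring n) (x y : 'I_n) :
  x != y -> edge_col c x y = edge_col c y x.
Proof.
rewrite /edge_col => x_neq_y.
by case: ltngtP => // /val_inj x_eq_y; rewrite x_eq_y eqxx in x_neq_y.
Qed.

(* [edge_col c x x] is junk, hence the [x != y]. *)
Definition col1_adj n (c : coloring n) : rel 'I_n :=
  fun x y => (x != y) && edge_col c x y.

Lemma col1_adj_irr n (c : coloring n) : irreflexive (col1_adj c).
Proof. by move=> x; rewrite /col1_adj eqxx. Qed.

Lemma col1_adj_sym n (c : coloring n) : symmetric (col1_adj c).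
Proof.
move=> x y; rewrite /col1_adj eq_sym.
by case: eqVneq => //= y_neq_x; rewrite edge_colC // eq_sym.
Qed.

Lemma embed_in_clique h n (e : rel 'I_h) (c : coloring n) (j : bool)
    (I : {set 'I_n}) :
  0 < h -> h <= #|I| -> {in I &, forall x y, x != y -> edge_col c x y = j} ->
  exists phi, embedding_in_color e c j phi /\ cyc_increasing phi.
Proof.
move=> h_gt0 h_le col_I.
have [x0 _] := card_gt0P (leq_trans h_gt0 h_le).
set r := take h (enum I).
have size_r : size r = h by rewrite size_takel // -cardE.
have sorted_r : sorted ltn (map val r).
  by rewrite map_take take_sorted ?sorted_enum_set.
have inj := nth_ord_inj (x0 := x0) size_r (sorted_ltn_val_uniq sorted_r).
have mem_I (i : 'I_h) : nth x0 r i \in I.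
  by rewrite -mem_enum; apply: mem_take (mem_nth _ _); rewrite size_r.
exists (fun i : 'I_h => nth x0 r i); split.
  by split=> // u v _ u_neq_v; rewrite col_I ?mem_I ?(inj_eq inj).
by apply: (nth_ord_cyc_increasing x0 size_r (t := 0)); rewrite ?rot0.
Qed.

Lemma embed_star a n (e : rel 'I_a) (c : coloring n) (j : bool)
    (x : 'I_n) (N : {set 'I_n}) :
  is_star e -> x \notin N -> a - 1 <= #|N| ->
  {in N, forall y, edge_col c x y = j} ->
  exists phi, embedding_in_color e c j phi /\ cyc_increasing phi.
Proof.
case=> ctr star_e xN card_N col_N.
have a_gt0 : 0 < a := leq_ltn_trans (leq0n ctr) (ltn_ord ctr).
pose N' := [set y in take (a - 1) (enum N)].
have sub_N' : N' \subset N.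
  by apply/subsetP => y; rewrite inE => /mem_take; rewrite mem_enum.
have card_N' : #|N'| = a - 1.
  by rewrite cardsE (card_uniqP _) ?take_uniq ?enum_uniq // size_takel -?cardE.
have xN' : x \notin N' by apply: contraNN xN => /(subsetP sub_N').
pose l := enum (x |: N').
have size_l : size l = a.
  by rewrite -cardE cardsU1 xN' card_N' add1n subn1 prednK.
have [p s' rot_l] : rot_to_spec l x by apply: rot_to; rewrite mem_enum setU11.
(* [x |: N'] in increasing cyclic order, rotated to put [x] at position [ctr] *)
pose r := rotr ctr (x :: s').
have size_r : size r = a by rewrite size_rotr -rot_l size_rot.
have r_ctr : nth x r ctr = x.
  apply: nth_rotr_cons.
  by move: size_r (ltn_ord ctr); rewrite size_rotr /=; lia.
have uniq_r : uniq r.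
  by rewrite rotr_uniq -rot_l rot_uniq sorted_ltn_val_uniq ?sorted_enum_set.
have eq_nth_r (u v : 'I_a) : (nth x r u == nth x r v) = (u == v).
  by rewrite nth_uniq ?size_r.
have leaf_col (v : 'I_a) : v != ctr -> edge_col c x (nth x r v) = j.
  move=> v_ctr; apply: col_N; apply: (subsetP sub_N').
  have : nth x r v \in x |: N'.
    by rewrite -mem_enum -/l -(mem_rot p) rot_l -(mem_rotr ctr) mem_nth ?size_r.
  by rewrite in_setU1 -[X in _ == X]r_ctr eq_nth_r (negbTE v_ctr).
exists (fun i : 'I_a => nth x r i); split; last first.
  apply: (nth_ord_cyc_increasing x size_r (t := rot_add r ctr (a - p))) => //.
  have rotK_l : rot (a - p) (rot p l) = l.
    by rewrite -{2}(rotK p l) /rotr size_rot size_l.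
  by rewrite -rot_rot_add rotrK -rot_l rotK_l sorted_enum_set.
split=> [u v /eqP | u v]; first by rewrite eq_nth_r => /eqP.
rewrite star_e => /orP[] /andP[/eqP-> not_ctr] _.
  by rewrite r_ctr leaf_col.
by rewrite r_ctr edge_colC ?leaf_col // -[X in _ != X]r_ctr eq_nth_r.
Qed.

Lemma path_succ_iota j m : path (fun u v => u.+1 == v) j (iota j.+1 m).
Proof. by elim: m j => //= m IH j; rewrite eqxx IH. Qed.

Lemma last_iota j m : last j (iota j.+1 m) = j + m.
Proof. by elim: m j => [|m IH] j /=; rewrite ?addn0 // IH addnS. Qed.

Lemma cycle_cmon b : 1 < b -> cycle (cmon b) (enum 'I_b).
Proof.
move=> b_gt1.
pose e u v := (u != v) &&
  [|| u.+1 == v, v.+1 == u, (u == 0) && (v == b.-1) | (v == 0) && (u == b.-1)].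
rewrite (@eq_cycle _ _ (relpre val e)) // -cycle_map val_enum_ord.
case: b b_gt1 @e => [|[|b]] // _ e.
rewrite /= rcons_path (sub_path _ (path_succ_iota 1 b)); last first.
  by move=> u v /eqP <-; rewrite /e eqxx neq_ltn ltnSn.
by rewrite last_iota /e /= !eqxx orbT.
Qed.

Lemma sorted_cmon_rot b t : 1 < b -> sorted (cmon b) (rot t (enum 'I_b)).
Proof.
move=> /cycle_cmon; rewrite -(rot_cycle t).
by case: (rot t _) => //= u s; rewrite rcons_path => /andP[].
Qed.

Definition block_coloring n k : coloring n := fun x y => x %/ k == y %/ k.

Lemma edge_col_block k n (x y : 'I_n) :
  edge_col (block_coloring k) x y = (x %/ k == y %/ k).
Proof. by rewrite /edge_col /block_coloring; case: ltnP; rewrite // eq_sym. Qed.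

Lemma block_coloring_star_free a k n (e : rel 'I_a) (phi : 'I_a -> 'I_n) :
  0 < k -> k < a -> is_star e ->
  ~ embedding_in_color e (block_coloring k) true phi.
Proof.
move=> k_gt0 k_lt_a [ctr star_e] [inj col].
have same_block u : phi u %/ k = phi ctr %/ k.
  have [-> // | u_ctr] := eqVneq u ctr.
  apply/eqP; rewrite eq_sym -edge_col_block col // ?star_e ?eqxx ?u_ctr //.
  by rewrite eq_sym.
pose rem_k u : 'I_k := Ordinal (ltn_pmod (phi u) k_gt0).
have rem_k_inj : injective rem_k.
  move=> u v /(congr1 val) /= eq_mod; apply: inj; apply: val_inj.
  by rewrite /= (divn_eq (phi u) k) (divn_eq (phi v) k) eq_mod !same_block.
by have := leq_card rem_k rem_k_inj; rewrite !card_ord leqNgt k_lt_a.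
Qed.

Lemma block_coloring_cmon_free b k n (phi : 'I_b -> 'I_n) :
  1 < b -> n <= k * (b - 1) ->
  embedding_in_color (cmon b) (block_coloring k) false phi ->
  ~ cyc_increasing phi.
Proof.
move=> b_gt1 n_le [_ col] [t sorted_t].
have k_gt0 : 0 < k by have := ltn_ord (phi (Ordinal (ltnW b_gt1))); nia.
pose R := rot t (enum 'I_b).
pose block i := phi i %/ k.
have blocks_inc : sorted ltn (map block R).
  have : sorted [rel u v | (phi u < phi v) && cmon b u v] R.
    rewrite sorted_relI sorted_cmon_rot // andbT.
    by move: sorted_t; rewrite -map_rot sorted_map.
  rewrite sorted_map; apply: sub_sorted => u v /andP[lt_uv adj_uv] /=.
  have := col u v adj_uv (andP adj_uv).1.
  rewrite edge_col_block => /negbT ne_uv.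
  by rewrite ltn_neqAle ne_uv leq_div2r // ltnW.
have blocks_small : {subset map block R <= iota 0 (b - 1)}.
  move=> _ /mapP[i _ ->]; rewrite mem_iota /block ltn_divLR //.
  by rewrite add0n mulnC; apply: leq_trans n_le.
have := uniq_leq_size (sorted_uniq ltn_trans ltnn blocks_inc) blocks_small.
by rewrite size_map size_rot size_enum_ord size_iota; lia.
Qed.

Lemma ramsey_cyc_star_cmon_upper a b (e : rel 'I_a) :
  0 < b -> is_star e -> ramsey_cyc_prop e (cmon b) (1 + (a - 1) * (b - 1)).
Proof.
move=> b_gt0 star_e c.
have [x deg_x | small_deg] :=
  pickP (fun x => a - 1 <= #|[set y | col1_adj c x y]|).
  left; apply: (embed_star (x := x) star_e _ deg_x).
    by rewrite inE col1_adj_irr.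
  by move=> y; rewrite inE => /andP[].
right.
have deg y : #|[set z | col1_adj c y z]| < a - 1 by rewrite ltnNge small_deg.
have [I [_ indep_I]] :=
  greedy_independent_set (@col1_adj_irr _ c) (@col1_adj_sym _ c) deg setT.
rewrite cardsT card_ord => card_I.
apply: (embed_in_clique _ b_gt0 (I := I)).
  by move: #|I| card_I => m; nia.
move=> y z yI zI y_neq_z; apply: negbTE.
by have := indep_I y z yI zI; rewrite /col1_adj y_neq_z.
Qed.

Lemma ramsey_cyc_star_cmon_lower a b n (e : rel 'I_a) :
  1 < b -> is_star e -> n <= (a - 1) * (b - 1) ->
  ~ ramsey_cyc_prop e (cmon b) n.
Proof.
move=> b_gt1 star_e n_le /(_ (block_coloring (a - 1))).
case=> [[phi [emb _]] | [phi [emb]]]; last exact: block_coloring_cmon_free emb.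
have [ctr _] := star_e.
move: (ltn_ord ctr) (ltn_ord (phi ctr)) => ctr_lt phi_lt.
by apply: (block_coloring_star_free _ _ star_e emb); nia.
Qed.

Theorem corollary4p19 (a b : nat) (e : rel 'I_a) :
  (1 <= a)%N -> (2 <= b)%N -> is_star e ->
  Rcyc_eq e (cmon b) (1 + (a - 1) * (b - 1)).
Proof.
(* [1 <= a] also follows from [is_star e]. *)
move=> _ b_gt1 star_e; split.
  exact: ramsey_cyc_star_cmon_upper (ltnW b_gt1) star_e.
move=> n n_lt; apply: ramsey_cyc_star_cmon_lower => //; lia.
Qed.
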